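(* There is a circuit with $O(n)$ generalized boolean gates and depth $O(\log n)$ that solves the generalized binary-to-unary conversion problem on $n$ receivers: given indicator bits $x[1],\dots,x[n]$ and an integer $\ell\in\{0,1,\dots,n\}$ in binary, it outputs bits $y[1],\dots,y[n]$ such that among the indices $i$ with $x[i]=1$, the first $\ell$ such indices (in increasing order) have $y[i]=1$ and all the others have $y[i]=0$ (indices with $x[i]=0$ may receive arbitrary bits).
   Context: A generalized boolean gate has constant fan-in and constant fan-out and computes an arbitrary fixed truth table. Depth is the longest input-to-output path length. *)

From mathcomp Require Import all_boot.
Set Implicit Arguments. Unset Strict Implicit. Unset Printing Implicit Defensive.

Record gate := Gate { gate_ins : seq nat ; gate_fn : seq bool -> bool }.

(* A circuit with [c_nin] input wires.  Wires are numbered: 0 .. c_nin-1 are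
   the inputs, c_nin + j is the output of gate j.  [c_outs] lists the output
   wires. *)
Record circuit := Circuit {
  c_nin : nat ;
  c_gates : seq gate ;
  c_outs : seq nat }.

Definition wf_circuit (C : circuit) : Prop :=
  (forall j, j < size (c_gates C) ->
     all (fun w => w < c_nin C + j) (gate_ins (nth (Gate [::] (fun _ => false)) (c_gates C) j)))
  /\ all (fun w => w < c_nin C + size (c_gates C)) (c_outs C).

Definition wire_values (C : circuit) (inp : seq bool) : seq bool :=
  foldl (fun vals g => rcons vals (gate_fn g [seq nth false vals w | w <- gate_ins g]))
        inp (c_gates C).

Definition eval_circuit (C : circuit) (inp : seq bool) : seq bool :=
  [seq nth false (wire_values C inp) w | w <- c_outs C].

Definition wire_depths (C : circuit) : seq nat :=
  foldl (fun ds g => rcons ds (\max_(w <- gate_ins g) nth 0 ds w).+1)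
        (nseq (c_nin C) 0) (c_gates C).

Definition depth (C : circuit) : nat := \max_(w <- c_outs C) nth 0 (wire_depths C) w.

Definition size_circuit (C : circuit) : nat := size (c_gates C).

(* Every gate has fan-in at most c and fan-out (number of gate input slots
   reading its output) at most c. *)
Definition bounded_fan (c : nat) (C : circuit) : Prop :=
  all (fun g => size (gate_ins g) <= c) (c_gates C) /\
  (forall j, j < size (c_gates C) ->
     sumn [seq count (pred1 (c_nin C + j)) (gate_ins g) | g <- c_gates C] <= c).

Definition nbits (n : nat) : nat := (trunc_log 2 n).+1.

Definition bin (m l : nat) : seq bool := [seq odd (l %/ 2 ^ i) | i <- iota 0 m].

Definition solves_b2u (n : nat) (C : circuit) : Prop :=
  c_nin C = n + nbits n /\ size (c_outs C) = n /\
  forall (x : seq bool) (l : nat), size x = n -> l <= n ->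
    let y := eval_circuit C (x ++ bin (nbits n) l) in
    forall i, i < n -> nth false x i ->
      nth false y i = (count id (take i x) < l).

From mathcomp Require Import all_boot zify.
Set Implicit Arguments. Unset Strict Implicit. Unset Printing Implicit Defensive.

(* Let K = nbits n and consider the complete binary tree of height K whose
   leaves 0 .. 2^K - 1 hold x[0], .., x[n-1] followed by zeros; node (h, a)
   at height h covers the window of leaves [a 2^h, (a + 1) 2^h).
   - Bottom-up, each node computes in binary the number of ones in its
     window, with a ripple-carry adder on the counts of its two children.
   - Top-down, each node learns which part of the quota l falls into its
     window, as a [window_status]: none of it (flag Empty), all of the window
     (flag Full), or an exact remainder below 2^h in binary.  A child gets it
     from its parent by subtracting the count of its left sibling with a
     ripple-borrow subtractor and testing the result ([window_refine]).
   - The output y[i] is the Full flag of leaf i.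
   All ripple chains are pipelined along the tree, so every gate fits at a
   level [rank] that is O(K); the tree has O(2^K) = O(n) gates; and a gate
   reads at most 4 wires, all from a bounded neighbourhood of its own label.
   The file first proves generic facts on circuit evaluation and on ripple
   chains, then builds the circuit, checks its well-formedness, depth, fan
   and size, proves it correct, and finally derives the theorem. *)

(* Both [wire_values] and [wire_depths] are left folds that append, gate
   after gate, one new entry computed from the entries already present. *)
Section AppendFold.
Variables (A G : Type) (F : G -> seq A -> A) (d : A).

Definition append_step (vs : seq A) (g : G) : seq A := rcons vs (F g vs).

Lemma size_append_fold gs init :
  size (foldl append_step init gs) = size init + size gs.
Proof.
elim: gs init => [|g gs IH] init /=; first by rewrite addn0.
by rewrite IH size_rcons addSnnS.
Qed.

Lemma nth_append_fold_prefix gs init i :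
  i < size init -> nth d (foldl append_step init gs) i = nth d init i.
Proof.
elim: gs init => [|g gs IH] init //= Hi.
rewrite IH; first by rewrite /append_step nth_rcons Hi.
by rewrite size_rcons ltnS ltnW.
Qed.

Lemma nth_append_fold_step gs init j g0 : j < size gs ->
  nth d (foldl append_step init gs) (size init + j) =
  F (nth g0 gs j) (foldl append_step init (take j gs)).
Proof.
move=> Hj; rewrite -{1}(cat_take_drop j gs) foldl_cat (drop_nth g0 Hj) /=.
rewrite nth_append_fold_prefix; last by rewrite size_rcons size_append_fold size_take Hj.
by rewrite /append_step nth_rcons size_append_fold size_take Hj ltnn eqxx.
Qed.

Lemma nth_append_fold_take gs init j i : j <= size gs -> i < size init + j ->
  nth d (foldl append_step init gs) i = nth d (foldl append_step init (take j gs)) i.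
Proof.
move=> Hj Hi; rewrite -{1}(cat_take_drop j gs) foldl_cat.
by rewrite nth_append_fold_prefix // size_append_fold size_takel.
Qed.

End AppendFold.

Arguments nth_append_fold_prefix {A G F d}.
Arguments nth_append_fold_step {A G F d}.
Arguments nth_append_fold_take {A G F d}.

(* The default gate used by [wf_circuit] for out-of-range indices. *)
Definition gate0 : gate := Gate [::] (fun _ => false).

Section CircuitEvaluation.
Variable C : circuit.
Hypothesis wfC : wf_circuit C.
Local Notation nin := (c_nin C).
Local Notation gate_at j := (nth gate0 (c_gates C) j).

Lemma gate_ins_lt j w : j < size (c_gates C) -> w \in gate_ins (gate_at j) -> w < nin + j.
Proof. by case: wfC => Hg _ Hj /(allP (Hg j Hj)). Qed.

Section Values.
Variable inp : seq bool.
Hypothesis size_inp : size inp = nin.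
Local Notation vals := (wire_values C inp).
Let step_val (g : gate) (vs : seq bool) : bool :=
  gate_fn g [seq nth false vs w | w <- gate_ins g].

Lemma wire_values_input i : i < nin -> nth false vals i = nth false inp i.
Proof.
move=> Hi; rewrite /wire_values -/(append_step step_val).
by rewrite nth_append_fold_prefix // size_inp.
Qed.

Lemma wire_values_gate j : j < size (c_gates C) ->
  nth false vals (nin + j) =
  gate_fn (gate_at j) [seq nth false vals w | w <- gate_ins (gate_at j)].
Proof.
move=> Hj; rewrite /wire_values -/(append_step step_val) -{1}size_inp.
rewrite (nth_append_fold_step _ _ _ gate0 Hj) /step_val; congr gate_fn.
apply/eq_in_map => w /(gate_ins_lt Hj) Hw.
by rewrite (nth_append_fold_take _ _ j _ (ltnW Hj)) // size_inp.
Qed.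
End Values.

Local Notation dps := (wire_depths C).
Let step_depth (g : gate) (ds : seq nat) : nat := (\max_(w <- gate_ins g) nth 0 ds w).+1.

Lemma wire_depths_input i : i < nin -> nth 0 dps i = 0.
Proof.
move=> Hi; rewrite /wire_depths -/(append_step step_depth).
by rewrite nth_append_fold_prefix ?size_nseq // nth_nseq Hi.
Qed.

Lemma wire_depths_gate j : j < size (c_gates C) ->
  nth 0 dps (nin + j) = (\max_(w <- gate_ins (gate_at j)) nth 0 dps w).+1.
Proof.
move=> Hj; rewrite /wire_depths -/(append_step step_depth).
rewrite -[X in nth _ _ (X + _)](size_nseq nin 0).
rewrite (nth_append_fold_step _ _ _ gate0 Hj) /step_depth; congr S.
apply: eq_big_seq => w /(gate_ins_lt Hj) Hw.
by rewrite (nth_append_fold_take _ _ j _ (ltnW Hj)) // size_nseq.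
Qed.

End CircuitEvaluation.

Definition bval (m : nat) (f : nat -> bool) : nat := \sum_(j < m) f j * 2 ^ j.

Lemma bval0 f : bval 0 f = 0. Proof. by rewrite /bval big_ord0. Qed.

Lemma bvalS m f : bval m.+1 f = bval m f + f m * 2 ^ m.
Proof. by rewrite /bval big_ord_recr. Qed.

Lemma bval_lt m f : bval m f < 2 ^ m.
Proof.
elim: m => [|m IH]; first by rewrite bval0.
by rewrite bvalS expnS; case: (f m); lia.
Qed.

Lemma eq_bval m f g : (forall j, j < m -> f j = g j) -> bval m f = bval m g.
Proof. by move=> fg; apply: eq_bigr => i _; rewrite fg. Qed.

Lemma bval_false m : bval m (fun _ => false) = 0.
Proof. by rewrite /bval big1. Qed.

Lemma bval_topbit m f : f m = (2 ^ m <= bval m.+1 f).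
Proof. by rewrite bvalS; have := bval_lt m f; case: (f m) => /=; lia. Qed.

Lemma bval_digits m l : bval m (fun j => odd (l %/ 2 ^ j)) + l %/ 2 ^ m * 2 ^ m = l.
Proof.
elim: m => [|m IH]; first by rewrite bval0 expn0 divn1 muln1.
rewrite bvalS expnS (mulnC 2) divnMA.
by have := odd_double_half (l %/ 2 ^ m); rewrite -muln2; lia.
Qed.

Definition carry_in (c : nat -> bool) (j : nat) : bool :=
  if j is j'.+1 then c j' else false.

Lemma ripple_add m f g s c :
  (forall j, j < m -> s j = f j (+) g j (+) carry_in c j) ->
  (forall j, j < m -> c j = [|| f j && g j, f j && carry_in c j | g j && carry_in c j]) ->
  bval m f + bval m g = bval m s + carry_in c m * 2 ^ m.
Proof.
elim: m => [|m IH] Hs Hc; first by rewrite !bval0.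
have IH' := IH (fun j Hj => Hs j (ltnW Hj)) (fun j Hj => Hc j (ltnW Hj)).
have E : f m + g m + carry_in c m = s m + 2 * c m.
  by rewrite Hs // Hc //; case: (f m); case: (g m); case: (carry_in c m).
by rewrite !bvalS /= expnS; nia.
Qed.

Lemma ripple_sub m f g t b :
  (forall j, j < m -> t j = f j (+) g j (+) carry_in b j) ->
  (forall j, j < m -> b j = (~~ f j && (g j || carry_in b j)) || (g j && carry_in b j)) ->
  bval m f + carry_in b m * 2 ^ m = bval m g + bval m t.
Proof.
elim: m => [|m IH] Ht Hb; first by rewrite !bval0.
have IH' := IH (fun j Hj => Ht j (ltnW Hj)) (fun j Hj => Hb j (ltnW Hj)).
have E : f m + 2 * b m = g m + carry_in b m + t m.
  by rewrite Ht // Hb //; case: (f m); case: (g m); case: (carry_in b m).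
by rewrite !bvalS /= expnS; nia.
Qed.

Lemma or_chain m t z :
  (forall j, j <= m -> z j = carry_in z j || t j) -> z m = (0 < bval m.+1 t).
Proof.
elim: m => [|m IH] Hz; first by rewrite Hz // /= bvalS bval0 /=; case: (t 0).
rewrite Hz // /= IH; last by move=> j Hj; apply: Hz; rewrite ltnW.
by rewrite (bvalS m.+1); have := expn_gt0 2 m.+1; case: (t m.+1) => /=; lia.
Qed.

(* Status of a window of capacity [2 ^ h] preceded by [o] ones, with respect
   to the quota of the first [l] ones: flag [z] means the quota is exhausted
   before the window, flag [f] means the whole window lies within the quota,
   and otherwise [t] holds the part [l - o] of the quota left for the window. *)
Definition window_status (h o l : nat) (z f : bool) (t : nat -> bool) : Prop :=
  [/\ z -> l <= o, f -> o + 2 ^ h <= l &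
      ~~ z -> ~~ f -> [/\ o <= l, l < o + 2 ^ h & bval h.+1 t = l - o]].

(* Passing from a window of capacity [2 ^ h.+1] to a subwindow of capacity
   [2 ^ h] preceded by [s <= 2 ^ h] further ones: subtract [s] from the
   remainder; a final borrow or a zero difference means the subwindow is
   empty, a difference of at least [2 ^ h] means it is full. *)
Lemma window_refine h l o s (zp fp : bool) (r sb t b nz : nat -> bool) :
  window_status h.+1 o l zp fp r ->
  s <= 2 ^ h -> bval h.+2 sb = s ->
  (forall j, j < h.+2 -> t j = r j (+) sb j (+) carry_in b j) ->
  (forall j, j < h.+2 -> b j = (~~ r j && (sb j || carry_in b j)) || (sb j && carry_in b j)) ->
  (forall j, j <= h.+1 -> nz j = carry_in nz j || t j) ->
  window_status h (o + s) l
    (zp || (~~ fp && (t h.+1 || ~~ nz h.+1)))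
    (fp || [&& ~~ zp, ~~ t h.+1 & t h]) t.
Proof.
move=> [Hz Hf Hm] Hs Hsb Ht Hb Hnz.
have pos : 0 < 2 ^ h by rewrite expn_gt0.
(* An exhausted or a full parent window passes its flag down. *)
case: zp Hz Hm => [Hz _ | _ Hm].
  by rewrite /= orbF; split=> // [_|/Hf]; rewrite ?expnS; lia.
case: fp Hf Hm => [Hf _ | _ Hm] /=.
  by split=> // _; have := Hf isT; rewrite expnS; lia.
(* Otherwise [t] is [(l - o) - s] modulo [2 ^ h.+2], and the final borrow,
   which is also the top bit of [t], signals [l < o + s]. *)
have [Hlo Hlt Hr] := Hm isT isT.
have Hdiff := ripple_sub Ht Hb; rewrite Hsb Hr in Hdiff.
have Hsplit := bvalS h.+1 t; rewrite (bval_topbit h.+1 t) in Hsplit.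
have Ht2 := bval_lt h.+2 t; have Ht1 := bval_lt h.+1 t.
rewrite (or_chain Hnz) (bval_topbit h.+1 t) (bval_topbit h t).
move: Hdiff Hsplit Hlt Ht2 Ht1; rewrite !expnS.
case: (carry_in b h.+2) => /= Hdiff Hsplit Hlt Ht2 Ht1.
all: case: leqP => H1; case: leqP => H2; case: ltnP => H3 /=.
all: split=> //= _; try split; lia.
Qed.

(* Gates are labelled [(k, h, a, j)]: bit [j] of the quantity of kind [k]
   computed at tree node [(h, a)]. *)
Notation kSum := 0%N (only parsing).
Notation kCarry := 1%N (only parsing).
Notation kDiff := 2%N (only parsing).
Notation kBorrow := 3%N (only parsing).
Notation kNonzero := 4%N (only parsing).
Notation kEmpty := 5%N (only parsing).
Notation kFull := 6%N (only parsing).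
Notation num_kinds := 7%N (only parsing).

Definition label : Type := (nat * nat * nat * nat)%type.
(* A gate reads circuit inputs ([inl i]) or other gates ([inr g]); a slot
   [None] in its list of sources stands for the constant [false]. *)
Definition source : Type := (nat + label)%type.

(* Re-inserts the constant slots into the values read on the actual wires. *)
Fixpoint expand (os : seq (option source)) (v : seq bool) : seq bool :=
  match os with
  | [::] => [::]
  | None :: os' => false :: expand os' v
  | Some _ :: os' => head false v :: expand os' (behead v)
  end.

Lemma expand_map (f : source -> bool) os :
  expand os [seq f s | s <- pmap id os] = [seq oapp f false o | o <- os].
Proof. by elim: os => [|[s|] os IH] //=; rewrite IH. Qed.

Section Construction.
Variable n : nat.
Local Notation K := (nbits n).

Definition num_inputs : nat := n + K.

(* Bit [j] of the number of ones under node [(h, a)]: the input [x[a]] at a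
   leaf (constant [false] beyond [n]), the counting adder's output above. *)
Definition count_bit (h a j : nat) : option source :=
  match h with
  | 0 => if (j == 0) && (a < n) then Some (inl a) else None
  | _.+1 => if j <= h then Some (inr (kSum, h, a, j)) else None
  end.

(* Bit [j] of the remainder received from the parent; the root receives [l]. *)
Definition remaining_bit (h a j : nat) : option source :=
  if h == K then (if j < K then Some (inl (n + j)) else None)
  else Some (inr (kDiff, h.+1, a./2, j)).

Definition parent_flag (k h a : nat) : option source :=
  if h == K then None else Some (inr (k, h.+1, a./2, 0)).

Definition chain_prev (k h a j : nat) : option source :=
  if j is j'.+1 then Some (inr (k, h, a, j')) else None.

(* Full adders at inner nodes add the counts of both children; full
   subtractors take the left sibling's count (for a right child) from the
   parent's remainder; the flags combine the parent flags with the top two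
   difference bits and the nonzero test, as in [window_refine]. *)
Definition gate_sources (g : label) : seq (option source) :=
  let: (k, h, a, j) := g in
  match k with
  | kSum | kCarry =>
      if h is h'.+1 then [:: count_bit h' a.*2 j; count_bit h' a.*2.+1 j; chain_prev kCarry h a j]
      else [::]
  | kDiff | kBorrow =>
      [:: remaining_bit h a j; if odd a then count_bit h a.-1 j else None; chain_prev kBorrow h a j]
  | kNonzero => [:: chain_prev kNonzero h a j; Some (inr (kDiff, h, a, j))]
  | kEmpty =>
      if j == 0 then [:: parent_flag kEmpty h a; parent_flag kFull h a;
                         Some (inr (kDiff, h, a, h.+1)); Some (inr (kNonzero, h, a, h.+1))]
      else [::]
  | _ =>
      if j == 0 then [:: parent_flag kEmpty h a; parent_flag kFull h a;
                         Some (inr (kDiff, h, a, h.+1)); Some (inr (kDiff, h, a, h))]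
      else [::]
  end.

Definition gate_logic (g : label) (v : seq bool) : bool :=
  let b i := nth false v i in
  match g.1.1.1 with
  | kSum | kDiff => b 0 (+) b 1 (+) b 2
  | kCarry => [|| b 0 && b 1, b 0 && b 2 | b 1 && b 2]
  | kBorrow => (~~ b 0 && (b 1 || b 2)) || (b 1 && b 2)
  | kNonzero => b 0 || b 1
  | kEmpty => b 0 || (~~ b 1 && (b 2 || ~~ b 3))
  | _ => b 1 || [&& ~~ b 0, ~~ b 2 & b 3]
  end.

(* A level at which every gate can be scheduled: the counting adder at
   height [h] produces bit [j] at level [h + j + 1]; the subtractors start
   after all counts are known and descend one level per tree level, their
   ripple chains again pipelined bit by bit; the flags are computed after all
   differences, again descending one level per tree level. *)
Definition top_down_base : nat := K.*2.+2.

Definition rank (g : label) : nat :=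
  let: (k, h, a, j) := g in
  match k with
  | kSum | kCarry => h + j + 1
  | kDiff | kBorrow => top_down_base + (K - h) + j
  | kNonzero => top_down_base + (K - h) + j + 1
  | _ => top_down_base + K.*2 + 3 - h
  end.

(* The labels of actual gates: a kind, a node of the tree, and a bit
   position [j <= h.+1] (remainders at height [h] have [h.+2] bits; flag
   gates with [j > 0] are idle). *)
Definition valid_label (g : label) : bool :=
  let: (k, h, a, j) := g in [&& k < num_kinds, h <= K, a < 2 ^ (K - h) & j <= h.+1].

Definition all_labels : seq label :=
  flatten [seq flatten [seq flatten [seq [seq (k, h, a, j) | j <- iota 0 h.+2]
     | a <- iota 0 (2 ^ (K - h))] | h <- iota 0 K.+1] | k <- iota 0 num_kinds].

(* Gates are listed by increasing rank, which is a topological order. *)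
Definition rank_le (x y : label) : bool := rank x <= rank y.

Definition labels : seq label := sort rank_le (undup all_labels).

Definition wire_of (s : source) : nat :=
  match s with inl i => i | inr g => num_inputs + index g labels end.

Definition build_gate (g : label) : gate :=
  Gate [seq wire_of s | s <- pmap id (gate_sources g)]
       (fun v => gate_logic g (expand (gate_sources g) v)).

Definition b2u_circuit : circuit :=
  Circuit num_inputs (map build_gate labels)
          [seq wire_of (inr (kFull, 0, i, 0)) | i <- iota 0 n].

Lemma mem_labels g : (g \in labels) = valid_label g.
Proof.
rewrite mem_sort mem_undup; apply/idP/idP.
- case/flatten_mapP => k; rewrite mem_iota => /andP [_ Hk].
  case/flatten_mapP => h; rewrite mem_iota => /andP [_ Hh].
  case/flatten_mapP => a; rewrite mem_iota => /andP [_ Ha].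
  case/mapP => j; rewrite mem_iota => /andP [_ Hj] ->.
  by rewrite /= Hk Ha; lia.
- case: g => [[[k h] a] j] /and4P [Hk Hh Ha Hj].
  apply/flatten_mapP; exists k; first by rewrite mem_iota.
  apply/flatten_mapP; exists h; first by rewrite mem_iota; lia.
  apply/flatten_mapP; exists a; first by rewrite mem_iota.
  by apply/mapP; exists j => //; rewrite mem_iota; lia.
Qed.

Lemma uniq_labels : uniq labels.
Proof. by rewrite sort_uniq undup_uniq. Qed.

Lemma index_lt_rank x y : x \in labels -> y \in labels -> rank x < rank y ->
  index x labels < index y labels.
Proof.
move=> Hx Hy Hr; rewrite ltnNge; apply/negP => Hle.
have rank_le_trans : transitive rank_le by move=> a b c; apply: leq_trans.
have sorted_labels : sorted rank_le labels.
  by apply: sort_sorted => u v; apply: leq_total.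
have := sorted_leq_nth rank_le_trans (fun a => leqnn _) x sorted_labels.
move=> /(_ (index y labels) (index x labels)).
rewrite !inE !index_mem Hx Hy !nth_index // => /(_ isT isT Hle).
by rewrite /rank_le; lia.
Qed.

Lemma rank_pos g : valid_label g -> 0 < rank g.
Proof.
case: g => [[[k h] a] j] /and4P [Hk Hh _ _].
by case: k Hk => [|[|[|[|[|[|[|k]]]]]]] //= _; rewrite /top_down_base; lia.
Qed.

Lemma valid_half h a : h < K -> a < 2 ^ (K - h) -> a./2 < 2 ^ (K - h.+1).
Proof.
move=> Hh Ha; have E : K - h = (K - h.+1).+1 by lia.
by rewrite E expnS in Ha; rewrite -divn2 ltn_divLR //; lia.
Qed.

Lemma valid_double h a : h.+1 <= K -> a < 2 ^ (K - h.+1) -> a.*2.+1 < 2 ^ (K - h).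
Proof.
move=> Hh Ha; have E : K - h = (K - h.+1).+1 by lia.
by rewrite E expnS; lia.
Qed.

(* Labels that may read the output of gate [w]: a bounded neighbourhood. *)
Definition near (w g : label) : bool :=
  let: (k, h, a, j) := w in let: (k', h', a', j') := g in
  [&& k' < num_kinds, h' \in [:: h.+1; h; h.-1],
      a' \in [:: a./2; a; a.+1; a.*2; a.*2.+1] & j' \in [:: 0; j; j.+1]].

Definition source_ok (g : label) (o : option source) : Prop :=
  match o with
  | None => True
  | Some (inl i) => i < num_inputs
  | Some (inr w) => [/\ valid_label w, rank w < rank g & near w g]
  end.

Lemma gate_sources_ok g o : valid_label g -> o \in gate_sources g -> source_ok g o.
Proof.
case: g => [[[k h] a] j] /and4P[Hk Hh Ha Hj].
case: k Hk => [|[|[|[|[|[|[|k]]]]]]] Hk //= Ho.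
all: try (destruct h as [|h]; first by []).
all: try (destruct (j == 0) eqn:Ej; last by []).
all: rewrite ?inE in Ho.
all: repeat (case/orP: Ho => [/eqP -> | Ho]); try (move/eqP: Ho => ->).
all: rewrite /count_bit /remaining_bit /parent_flag /chain_prev /source_ok.
all: repeat match goal with
 | |- context [if ?b then _ else _] => destruct b eqn:?
 | |- context [match ?j with 0 => _ | _.+1 => _ end] => is_var j; destruct j
end.
all: rewrite /= ?inE; try done.
all: try (move/eqP: Ej => Ej; subst j).
all: repeat match goal with H : (_ && _) = true |- _ => case/andP: H => ? ? end.
all: rewrite ?/num_inputs; try lia.
all: split; [apply/and3P; split | | apply/and3P; split]; rewrite ?inE; try lia.
all: rewrite /top_down_base; try lia.
all: first [ have := @valid_double h.+1 a; lia | have := @valid_half h a; lia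
           | have := @valid_half h.+1 a; lia].
Qed.

Lemma nth_b2u_gates j : j < size labels ->
  nth gate0 (c_gates b2u_circuit) j = build_gate (nth (0, 0, 0, 0) labels j).
Proof. by move=> Hj; rewrite /b2u_circuit /= (nth_map (0, 0, 0, 0)). Qed.

Lemma b2u_gate_at g : g \in labels ->
  nth gate0 (c_gates b2u_circuit) (index g labels) = build_gate g.
Proof. by move=> Hg; rewrite nth_b2u_gates ?index_mem // nth_index. Qed.

Lemma gate_sources_wire g s : g \in labels -> Some s \in gate_sources g ->
  wire_of s < num_inputs \/
  exists2 w, s = inr w & [/\ w \in labels, rank w < rank g & near w g].
Proof.
rewrite mem_labels => Hg Hs; have := gate_sources_ok Hg Hs.
case: s {Hs} => [i|w] /=; first by left.
by case; rewrite -mem_labels => Hw Hr Hn; right; exists w.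
Qed.

Lemma build_gate_ins_lt g w : g \in labels -> w \in gate_ins (build_gate g) ->
  w < num_inputs + index g labels.
Proof.
move=> Hg /mapP [s]; rewrite mem_pmap map_id => Hs ->.
case: (gate_sources_wire Hg Hs) => [Hi | [w' -> [Hw' Hr _]]].
  exact: leq_trans Hi (leq_addr _ _).
by rewrite /= ltn_add2l index_lt_rank.
Qed.

Lemma n_lt_pow_nbits : n < 2 ^ K.
Proof. exact: trunc_log_ltn. Qed.

Lemma wf_b2u : wf_circuit b2u_circuit.
Proof.
split.
- move=> j; rewrite size_map => Hj; rewrite nth_b2u_gates //.
  have Hg : nth (0, 0, 0, 0) labels j \in labels by rewrite mem_nth.
  by apply/allP => w /(build_gate_ins_lt Hg); rewrite index_uniq // uniq_labels.
- apply/allP => w /mapP [i]; rewrite mem_iota add0n => Hi -> /=.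
  rewrite size_map ltn_add2l index_mem mem_labels /= leq0n subn0 andbT.
  exact: ltn_trans Hi n_lt_pow_nbits.
Qed.

Lemma wire_depth_le_rank g : g \in labels ->
  nth 0 (wire_depths b2u_circuit) (wire_of (inr g)) <= rank g.
Proof.
have [r] := ubnP (rank g); elim: r g => // r IH g Hr Hg.
have Hj : index g labels < size (c_gates b2u_circuit) by rewrite size_map index_mem.
have Hpos : 0 < rank g by apply: rank_pos; rewrite -mem_labels.
rewrite /= (wire_depths_gate wf_b2u Hj) b2u_gate_at // -(prednK Hpos) ltnS.
apply/bigmax_leqP_seq => w /mapP [s]; rewrite mem_pmap map_id => Hs -> _.
case: (gate_sources_wire Hg Hs) => [Hi | [w' -> [Hw' Hr' _]]].
  by rewrite wire_depths_input.
by apply: leq_trans (IH w' (leq_trans Hr' (ltnSE Hr)) Hw') _; rewrite -ltnS prednK.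
Qed.

(* Depth: outputs have rank [4 K + 5 <= 9 K]. *)
Lemma depth_b2u : depth b2u_circuit <= 9 * (trunc_log 2 n).+1.
Proof.
apply/bigmax_leqP_seq => w /mapP [i]; rewrite mem_iota add0n => Hi -> _.
have Hg : (kFull, 0, i, 0) \in labels.
  by rewrite mem_labels /= leq0n subn0 andbT (ltn_trans Hi n_lt_pow_nbits).
by apply: leq_trans (wire_depth_le_rank Hg) _; rewrite /= /top_down_base /nbits; lia.
Qed.

Definition neighbours (w : label) : seq label :=
  let: (k, h, a, j) := w in
  [seq (x, j') | x <- [seq (y, a') | y <- [seq (k', h') | k' <- iota 0 num_kinds,
      h' <- [:: h.+1; h; h.-1]], a' <- [:: a./2; a; a.+1; a.*2; a.*2.+1]],
      j' <- [:: 0; j; j.+1]].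

(* [7 * 3 * 5 * 3] candidate readers. *)
Lemma size_neighbours w : size (neighbours w) = 315.
Proof. by case: w => [[[k h] a] j]. Qed.

Lemma near_neighbours w g : near w g -> g \in neighbours w.
Proof.
case: w => [[[k h] a] j]; case: g => [[[k' h'] a'] j'] /and4P [Hk Hh Ha Hj].
by do 3 apply: allpairs_f => //; rewrite mem_iota.
Qed.

Lemma size_gate_sources g : size (gate_sources g) <= 4.
Proof.
case: g => [[[k h] a] j].
by case: k => [|[|[|[|[|[|[|k]]]]]]] /=; try (case: h => //); try (case: eqP => //).
Qed.

Lemma size_build_gate_ins g : size (gate_ins (build_gate g)) <= 4.
Proof.
rewrite size_map size_pmap.
exact: leq_trans (count_size _ _) (size_gate_sources g).
Qed.

End Construction.

Lemma sumn_le_support (T : eqType) (s R : seq T) (f : T -> nat) m :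
  uniq s -> (forall g, g \in s -> 0 < f g -> g \in R) -> (forall g, g \in s -> f g <= m) ->
  sumn (map f s) <= m * size R.
Proof.
move=> Hu HR Hm; rewrite sumnE big_map (bigID (mem R)) /=.
rewrite [X in _ + X]big1_seq ?addn0; last first.
  move=> g /andP [HgR Hg]; apply/eqP; rewrite -leqn0 leqNgt.
  by apply: contra HgR; apply: HR.
rewrite big_seq_cond (@leq_trans (\sum_(g <- s | g \in R) m)) //.
  by rewrite [X in _ <= X]big_seq_cond; apply: leq_sum => g /andP [/Hm].
rewrite big_const_seq iter_addn_0 leq_mul2l -size_filter; apply/orP; right.
apply: uniq_leq_size; first exact: filter_uniq.
by move=> x; rewrite mem_filter => /andP [].
Qed.

(* Fan-in and fan-out at most [4 * 315]: a wire is read only by the gates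
   near its own label, each through at most four slots. *)
Lemma fan_b2u n : bounded_fan 1260 (b2u_circuit n).
Proof.
split.
  rewrite /b2u_circuit /= all_map; apply/allP => g _ /=.
  exact: leq_trans (size_build_gate_ins n g) _.
move=> j; rewrite size_map => Hj.
set w := nth (0, 0, 0, 0) (labels n) j.
have Hw : w \in labels n by rewrite mem_nth.
have -> : j = index w (labels n) by rewrite index_uniq // uniq_labels.
have -> : 1260 = 4 * size (neighbours w) by rewrite size_neighbours.
rewrite -map_comp; apply: sumn_le_support (uniq_labels n) _ _ => g Hg /=.
- rewrite -has_count => /hasP [x /mapP [s]]; rewrite mem_pmap map_id => Hs -> /eqP Ew.
  case: (gate_sources_wire Hg Hs) => [Hi | [w' Es [Hw' _ Hnear]]].
    by rewrite Ew in Hi; lia.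
  suff -> : w = w' by apply: near_neighbours.
  rewrite -(nth_index (0, 0, 0, 0) Hw') -(nth_index (0, 0, 0, 0) Hw); congr nth.
  by rewrite Es /= in Ew; lia.
- exact: leq_trans (count_size _ _) (size_build_gate_ins n g).
Qed.

Lemma sumn_const (T : Type) (s : seq T) c : sumn [seq c | _ <- s] = size s * c.
Proof. by elim: s => //= _ s ->; rewrite mulSn. Qed.

Lemma size_flatten_map (T U : Type) (F : T -> seq U) s :
  size (flatten (map F s)) = sumn [seq size (F x) | x <- s].
Proof. by rewrite size_flatten /shape -map_comp. Qed.

(* The number of labels of one kind: [h.+2] bits at each of the
   [2 ^ (K - h)] nodes of height [h]. *)
Definition node_bits (K : nat) : nat := sumn [seq 2 ^ (K - h) * h.+2 | h <- iota 0 K.+1].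

(* Geometric decay of the node count outweighs the linear bit count. *)
Lemma node_bits_bound K : node_bits K + K + 4 <= 6 * 2 ^ K.
Proof.
elim: K => [|K IH] //; rewrite /node_bits -[K.+2]addn1 iotaD map_cat sumn_cat.
have -> : [seq 2 ^ (K.+1 - h) * h.+2 | h <- iota 0 K.+1] =
          [seq 2 * (2 ^ (K - h) * h.+2) | h <- iota 0 K.+1].
  by apply/eq_in_map => h; rewrite mem_iota add0n => Hh; rewrite subSn // expnS mulnA.
have sumn_double (s : seq nat) f : sumn [seq 2 * f x | x <- s] = 2 * sumn (map f s).
  by elim: s => //= x s ->; rewrite mulnDr.
rewrite sumn_double -/(node_bits K) expnS /= subnn; lia.
Qed.

Lemma size_all_labels n : size (all_labels n) = 7 * node_bits (nbits n).
Proof.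
rewrite /all_labels size_flatten_map.
under eq_map => k do rewrite size_flatten_map.
under eq_map => k do under eq_map => h do rewrite size_flatten_map.
under eq_map => k do under eq_map => h do under eq_map => a do rewrite size_map size_iota.
under eq_map => k do under eq_map => h do rewrite sumn_const size_iota.
by rewrite sumn_const size_iota.
Qed.

Lemma pow_nbits n : 2 ^ nbits n <= 2 * n.+1.
Proof.
rewrite /nbits expnS leq_mul2l /=.
case: (posnP n) => [->|Hn]; first by rewrite trunc_log0.
exact: leq_trans (trunc_logP (isT : 1 < 2) Hn) _.
Qed.

(* Size: at most [7 * 6 * 2 ^ K <= 84 (n + 1)] gates. *)
Lemma size_b2u n : size_circuit (b2u_circuit n) <= 84 * n.+1.
Proof.
rewrite /size_circuit /b2u_circuit /= size_map size_sort.
apply: leq_trans (size_undup _) _; rewrite size_all_labels.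
by have := node_bits_bound (nbits n); have := pow_nbits n; lia.
Qed.

Lemma count_take (x : seq bool) i : count id (take i x) = \sum_(0 <= j < i) nth false x j.
Proof.
elim: x i => [|b x IH] i /=.
  by rewrite big1 // => j _; rewrite nth_nil.
case: i => [|i] /=; first by rewrite big_geq.
by rewrite big_nat_recl //= IH.
Qed.

Lemma sum_bits_le (F : nat -> bool) m k : \sum_(m <= i < m + k) F i <= k.
Proof.
apply: (@leq_trans (\sum_(m <= i < m + k) 1)).
  by apply: leq_sum => i _; case: (F i).
by rewrite sum_nat_const_nat addKn muln1.
Qed.

Section Correctness.
Variables (n : nat) (x : seq bool) (l : nat).
Hypotheses (size_x : size x = n) (l_le_n : l <= n).
Local Notation K := (nbits n).
Local Notation inp := (x ++ bin K l).

Lemma size_inp : size inp = num_inputs n.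
Proof. by rewrite size_cat size_map size_iota size_x. Qed.

Lemma inp_x i : i < n -> nth false inp i = nth false x i.
Proof. by move=> Hi; rewrite nth_cat size_x Hi. Qed.

Lemma inp_l j : j < K -> nth false inp (n + j) = odd (l %/ 2 ^ j).
Proof.
move=> Hj; rewrite nth_cat size_x ltnNge leq_addr /= addKn.
by rewrite /bin (nth_map 0) ?size_iota // nth_iota.
Qed.

Definition wire_val (g : label) : bool :=
  nth false (wire_values (b2u_circuit n) inp) (wire_of n (inr g)).

Definition src_val (s : source) : bool :=
  match s with inl i => nth false inp i | inr g => wire_val g end.

Definition source_val (o : option source) : bool := oapp src_val false o.

Lemma wire_val_gate g : valid_label n g ->
  wire_val g = gate_logic g [seq source_val o | o <- gate_sources n g].
Proof.
rewrite -mem_labels => Hg.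
have Hj : index g (labels n) < size (c_gates (b2u_circuit n)) by rewrite size_map index_mem.
rewrite /wire_val /= (wire_values_gate (wf_b2u n) size_inp Hj) b2u_gate_at //=.
rewrite -map_comp -expand_map; congr (gate_logic g (expand _ _)).
apply/eq_in_map => s; rewrite mem_pmap map_id => Hs /=.
case: (gate_sources_wire Hg Hs) => [Hi | [w -> _]] //.
by case: s Hs Hi => [i|w] //= _ Hi; rewrite wire_values_input ?size_inp.
Qed.

Lemma chain_prev_val k h a j :
  source_val (chain_prev k h a j) = carry_in (fun j => wire_val (k, h, a, j)) j.
Proof. by case: j. Qed.

Local Notation X i := (nth false x i).

Definition ones_in (h a : nat) : nat := \sum_(a * 2 ^ h <= i < a * 2 ^ h + 2 ^ h) X i.

Definition ones_before (h a : nat) : nat := \sum_(0 <= i < a * 2 ^ h) X i.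

Lemma ones_in_split h a : ones_in h.+1 a = ones_in h a.*2 + ones_in h a.*2.+1.
Proof.
rewrite /ones_in.
have E1 : a * 2 ^ h.+1 = a.*2 * 2 ^ h by rewrite expnS; lia.
have E2 : a.*2.+1 * 2 ^ h = a.*2 * 2 ^ h + 2 ^ h by lia.
have E3 : a * 2 ^ h.+1 + 2 ^ h.+1 = a.*2.+1 * 2 ^ h + 2 ^ h by rewrite expnS; lia.
by rewrite E3 E1 E2 (big_cat_nat _ (n := a.*2 * 2 ^ h + 2 ^ h)) //=; lia.
Qed.

Lemma ones_in_le h a : ones_in h a <= 2 ^ h.
Proof. exact: sum_bits_le. Qed.

Lemma ones_before_split h a :
  ones_before h a = ones_before h.+1 a./2 + (if odd a then ones_in h a.-1 else 0).
Proof.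
rewrite /ones_before /ones_in.
have Ea := odd_double_half a.
have E1 : a./2 * 2 ^ h.+1 = a./2.*2 * 2 ^ h by rewrite expnS; lia.
rewrite E1; case: (odd a) Ea => /= Ea; last by rewrite -{1}Ea add0n addn0.
have E2 : a.-1 = a./2.*2 by lia.
have E3 : a * 2 ^ h = a./2.*2 * 2 ^ h + 2 ^ h by rewrite -{1}Ea; lia.
by rewrite E2 E3 (big_cat_nat _ (n := a./2.*2 * 2 ^ h)) //= leq_addr.
Qed.

Definition count_val (h a j : nat) : bool := source_val (count_bit n h a j).

Lemma count_correct h : h <= K -> forall a, a < 2 ^ (K - h) ->
  bval h.+1 (count_val h a) = ones_in h a /\ (forall j, h < j -> count_val h a j = false).
Proof.
elim: h => [|h IH] Hh a Ha.
  split; last by case.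
  rewrite bvalS bval0 /count_val /= /ones_in expn0 muln1 addn1 big_nat1 add0n muln1.
  by case: ltnP => H /=; [rewrite inp_x | rewrite nth_default // size_x].
have Ha2 := valid_double Hh Ha.
have [IH1 IH2] := IH (ltnW Hh) a.*2 (ltnW Ha2).
have [IH3 IH4] := IH (ltnW Hh) a.*2.+1 Ha2.
set S := fun j => wire_val (kSum, h.+1, a, j).
set C := fun j => wire_val (kCarry, h.+1, a, j).
have HS j : j < h.+2 -> S j = count_val h a.*2 j (+) count_val h a.*2.+1 j (+) carry_in C j.
  by move=> Hj; rewrite /S wire_val_gate /= ?chain_prev_val // Hh Ha; lia.
have HC j : j < h.+2 -> C j = [|| count_val h a.*2 j && count_val h a.*2.+1 j,
      count_val h a.*2 j && carry_in C j | count_val h a.*2.+1 j && carry_in C j].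
  by move=> Hj; rewrite /C wire_val_gate /= ?chain_prev_val // Hh Ha; lia.
have Hadd := ripple_add (fun j Hj => HS j (ltnW Hj)) (fun j Hj => HC j (ltnW Hj)).
split; last by move=> j Hj; rewrite /count_val /= leqNgt Hj.
rewrite (@eq_bval _ _ S); last by move=> j Hj; rewrite /count_val /= -ltnS Hj.
by rewrite bvalS HS // IH2 // IH4 // /= -Hadd IH1 IH3 ones_in_split.
Qed.

Definition node_status (h a : nat) : Prop :=
  window_status h (ones_before h a) l (wire_val (kEmpty, h, a, 0)) (wire_val (kFull, h, a, 0))
                (fun j => wire_val (kDiff, h, a, j)).

Lemma node_status_step h a o : h <= K -> a < 2 ^ (K - h) ->
  ones_before h a = o + (if odd a then ones_in h a.-1 else 0) ->
  window_status h.+1 o l (source_val (parent_flag n kEmpty h a))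
    (source_val (parent_flag n kFull h a)) (fun j => source_val (remaining_bit n h a j)) ->
  node_status h a.
Proof.
move=> Hh Ha Eoff Hparent.
set s := if odd a then ones_in h a.-1 else 0.
have Hs : s <= 2 ^ h by rewrite /s; case: (odd a) => //; apply: ones_in_le.
have Hsb : bval h.+2 (fun j => source_val (if odd a then count_bit n h a.-1 j else None)) = s.
  rewrite /s; case: (odd a); last by rewrite (@eq_bval _ _ (fun _ => false)) ?bval_false.
  have Ha1 : a.-1 < 2 ^ (K - h) by apply: leq_ltn_trans Ha; apply: leq_pred.
  have [H1 H2] := count_correct Hh Ha1.
  by rewrite bvalS; rewrite /count_val in H1 H2; rewrite H2 // addn0 H1.
have gate_eq k j : k < num_kinds -> j <= h.+1 ->
    wire_val (k, h, a, j) =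
    gate_logic (k, h, a, j) [seq source_val o | o <- gate_sources n (k, h, a, j)].
  by move=> Hk Hj; rewrite wire_val_gate //= Hk Hh Ha.
(* Flags, differences, borrows and prefix-ORs implement [window_refine]. *)
rewrite /node_status Eoff -/s !gate_eq //= /gate_logic /=.
apply: (window_refine (b := fun j => wire_val (kBorrow, h, a, j))
                      (nz := fun j => wire_val (kNonzero, h, a, j)) Hparent Hs Hsb).
all: by move=> j Hj; rewrite gate_eq //= ?chain_prev_val //; lia.
Qed.

(* The root receives [l], which is below its capacity [2 ^ K.+1]. *)
Lemma root_status : window_status K.+1 0 l false false
  (fun j => source_val (remaining_bit n K 0 j)).
Proof.
have HlK : l < 2 ^ K := leq_ltn_trans l_le_n (n_lt_pow_nbits n).
split=> // _ _; split=> //.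
  by rewrite add0n (ltn_trans HlK) // ltn_exp2l.
rewrite subn0 (@eq_bval _ _ (fun j => if j < K then odd (l %/ 2 ^ j) else false)); last first.
  by move=> j _; rewrite /remaining_bit eqxx; case: ltnP => // Hj /=; apply: inp_l.
rewrite bvalS bvalS ltnn ltnNge leqnSn /= !addn0.
rewrite (@eq_bval _ _ (fun j => odd (l %/ 2 ^ j))); last by move=> j ->.
by have := bval_digits K l; rewrite divn_small // mul0n addn0.
Qed.

Lemma node_status_all h a : h <= K -> a < 2 ^ (K - h) -> node_status h a.
Proof.
have [k] := ubnP (K - h); elim: k h a => // k IH h a Hk Hh Ha.
have [HhK | HhK] := eqVneq h K.
  subst h; move: Ha; rewrite subnn expn0 ltnS leqn0 => /eqP ->.
  apply: (node_status_step (o := 0)) => //; first by rewrite subnn.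
    by rewrite /ones_before mul0n big_geq.
  by have := root_status; rewrite /parent_flag eqxx.
have HhK' : h < K by rewrite ltn_neqAle HhK Hh.
have Hparent := IH h.+1 a./2 ltac:(lia) HhK' (valid_half HhK' Ha).
apply: (node_status_step (o := ones_before h.+1 a./2)) => //; first exact: ones_before_split.
by move: Hparent; rewrite /parent_flag /remaining_bit (negbTE HhK).
Qed.

Lemma b2u_output i : i < n ->
  nth false (eval_circuit (b2u_circuit n) inp) i = (count id (take i x) < l).
Proof.
move=> Hi.
rewrite /eval_circuit /= (nth_map 0) ?size_map ?size_iota // (nth_map 0) ?size_iota //.
rewrite nth_iota // add0n -/(wire_val (kFull, 0, i, 0)).
have Hi2 : i < 2 ^ (K - 0) by rewrite subn0 (ltn_trans Hi (n_lt_pow_nbits n)).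
have [Hz Hf Hm] := node_status_all (leq0n _) Hi2.
have Eo : ones_before 0 i = count id (take i x) by rewrite /ones_before expn0 muln1 count_take.
rewrite Eo expn0 in Hz Hf Hm.
case: (wire_val (kFull, 0, i, 0)) Hf Hm => /= [Hf _ | _ Hm]; first by have := Hf isT; lia.
case: (wire_val (kEmpty, 0, i, 0)) Hz Hm => /= [Hz _ | _ Hm]; first by have := Hz isT; lia.
by have [H1 H2 _] := Hm isT isT; lia.
Qed.

End Correctness.

Theorem mainTheorem10 :
  exists (c A B : nat), forall n : nat, exists C : circuit,
    [/\ wf_circuit C, bounded_fan c C, solves_b2u n C,
        size_circuit C <= A * n.+1 & depth C <= B * (trunc_log 2 n).+1].
Proof.
exists 1260, 84, 9 => n; exists (b2u_circuit n); split.
- exact: wf_b2u.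
- exact: fan_b2u.
- split=> //; split; first by rewrite size_map size_iota.
  by move=> x l Hx Hl /= i Hi _; apply: b2u_output.
- exact: size_b2u.
- exact: depth_b2u.
Qed.
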